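(* There exists $\ell_0\in\mathbb{N}$ such that for all integers $\ell\ge \ell_0$ the following holds. Let $\delta>0$ and let $m,k\in\mathbb{N}$ with $m\le 2^k$. Let $G$ be a digraph on $n=\ell m$ vertices with $\delta^0(G)\ge \delta n$. Then there exists a partition of $V(G)$ into sets $V_1,\dots,V_m$ such that, for all $i\in\{1,\dots,m\}$, $|V_i|=\ell$ and \[ \delta^0(G[V_i])\ \ge\ \Big(\delta-2\ell^{-1/3}\sum_{0\le j\le k-1}2^{-j/3}\Big)\ell\ \ge\ \big(\delta-10\ell^{-1/3}\big)\ell . \]
   Context: For a digraph $G$, $d^+(v)$ and $d^-(v)$ denote the out-degree and in-degree of a vertex $v$, and $\delta^0(G)=\min\{d^+(v),d^-(v):v\in V(G)\}$ is the minimum semi-degree. For $W\subseteq V(G)$, $G[W]$ is the subdigraph induced on $W$. *)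

From HB Require Import structures.
From mathcomp Require Import all_boot all_order all_algebra.
From mathcomp Require Import all_classical all_reals all_analysis.
Set Implicit Arguments. Unset Strict Implicit. Unset Printing Implicit Defensive.

(* A digraph on a finite vertex type T is an irreflexive relation e : rel T
   (e x y = arc from x to y). *)
Definition digraph (T : finType) (e : rel T) : Prop := irreflexive e.

Definition outdeg_in (T : finType) (e : rel T) (W : {set T}) (v : T) : nat :=
  #|[set w in W | e v w]|.
Definition indeg_in (T : finType) (e : rel T) (W : {set T}) (v : T) : nat :=
  #|[set w in W | e w v]|.

(* Minimum semi-degree delta^0(G[W]) (conventionally #|T| when W is empty). *)
Definition min_semideg (T : finType) (e : rel T) (W : {set T}) : nat :=
  \big[minn/#|T|]_(v in W) minn (outdeg_in e W v) (indeg_in e W v).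

(* A vertex set W of size N = l m with 2^k < m <= 2^(k+1) is
   split into pieces of sizes l (m - m/2) and l (m/2), each partitioned by
   induction, so that every out- and in-neighbourhood inside W is cut
   proportionally up to an error 2 lam, where lam = N s / 3 and
   s = l^(-1/3) 2^(-k/3); this costs 2 s of relative semidegree, and these costs
   add up to the geometric sum of the statement, which is at most 10 l^(-1/3).
   The split comes from the probabilistic method: a random subset containing each
   vertex with probability p = a / N deviates by more than lam from the mean on
   one of the 2 N neighbourhoods or on W itself with probability at most
   (4 N + 2) exp (- N s^2 / 72) by Chernoff bounds, and this is < 1 for l large
   because N s^2 >= (l 2^k)^(1/3); padding or trimming the subset to exactly a
   vertices then moves each count by at most lam. *)

From HB Require Import structures.
From mathcomp Require Import all_boot all_order all_algebra.
From mathcomp Require Import all_classical all_reals all_analysis.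
From mathcomp Require Import ring lra zify.
Import Order.TTheory GRing.Theory Num.Theory.
Set Implicit Arguments. Unset Strict Implicit. Unset Printing Implicit Defensive.
Local Open Scope ring_scope.

Section Semidegree.
Variables (R : realType) (T : finType) (e : rel T).
Implicit Types (W U : {set T}) (v : T) (b : bool).

Definition nbhd W v b : {set T} :=
  if b then [set w in W | e v w] else [set w in W | e w v].

Definition semideg_lb W (d : R) : Prop :=
  forall v b, v \in W -> d <= #|nbhd W v b|%:R.

Lemma nbhd_subset W v b : nbhd W v b \subset W.
Proof. by apply/fintype.subsetP => w; case: b; rewrite inE => /andP[]. Qed.

Lemma nbhd_setI W U v b : U \subset W -> nbhd U v b = nbhd W v b :&: U.
Proof.
move=> UW; apply/finset.setP => w; case: b; rewrite !inE;
  by case wU: (w \in U); rewrite ?andbF ?andbT // (fintype.subsetP UW w wU).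
Qed.

Lemma nbhd_setD W U v b : nbhd (W :\: U) v b = nbhd W v b :\: U.
Proof. by apply/finset.setP => w; case: b; rewrite !inE andbA. Qed.

Lemma semideg_lb_min_semideg W : semideg_lb W (min_semideg e W)%:R.
Proof.
move=> v b vW; rewrite ler_nat.
have := bigmin_le_cond #|T| (fun u => minn (outdeg_in e W u) (indeg_in e W u)) vW.
by case: b => /leq_trans; apply; rewrite ?geq_minl ?geq_minr.
Qed.

Lemma min_semideg_ge W (d : R) :
  (0 < #|W|)%N -> semideg_lb W d -> d <= (min_semideg e W)%:R.
Proof.
case/card_gt0P => v0 v0W lbW.
have dT : d <= #|T|%:R by apply: le_trans (lbW v0 true v0W) _; rewrite ler_nat max_card.
rewrite /min_semideg; elim/big_ind: _ => // [x y dx dy | v vW].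
  by rewrite /minn; case: ltnP.
by have := lbW v true vW; have := lbW v false vW; rewrite /minn; case: ltnP.
Qed.

End Semidegree.

Lemma expR_le_quadratic (R : realType) (x : R) : x <= 2^-1 ->
  expR x <= 1 + x + 2 * x ^+ 2.
Proof.
move=> x_le.
have : (1 - x) * expR x <= 1.
  have := ler_wpM2r (expR_ge0 x) (expR_ge1Dx (- x)).
  by rewrite expRN mulVf ?gt_eqF ?expR_gt0.
have := expR_gt0 x; nra.
Qed.

(* For [eta = lam / (4 N)] (resp. [- lam / (4 N)]) the threshold below is
   [p n + lam] (resp. [p n - lam]) and the bound is [exp (- lam^2 / (8 N))]. *)
Lemma chernoff_exponent (R : realType) (p N eta : R) (n : nat) :
  0 <= p <= 1 -> n%:R <= N -> eta <= 2^-1 ->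
  expR (- (eta * (p * n%:R + 4 * N * eta))) * (1 - p + p * expR eta) ^+ n
    <= expR (- (2 * N * eta ^+ 2)).
Proof.
move=> /andP[p0 p1] nN eta_le.
have base_le : 1 - p + p * expR eta <= expR (p * (expR eta - 1)).
  by have := expR_ge1Dx (p * (expR eta - 1)); lra.
have base_ge0 : 0 <= 1 - p + p * expR eta by have := expR_ge0 eta; nra.
have pow_le := lerXn2r n base_ge0 (expR_ge0 _) base_le; rewrite -expRM_natl in pow_le.
apply: le_trans (ler_wpM2l (expR_ge0 _) pow_le) _.
rewrite -expRD ler_expR.
have np0 : 0 <= n%:R * p by rewrite mulr_ge0.
have := ler_wpM2l np0 (expR_le_quadratic eta_le).
have : n%:R * p * eta ^+ 2 <= N * eta ^+ 2.
  by rewrite ler_wpM2r ?sqr_ge0 //; apply: le_trans nN; rewrite ler_piMr.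
nra.
Qed.

Section RandomSubset.
Variables (R : realType) (T : finType) (W : {set T}) (p : R).
Hypothesis p01 : 0 <= p <= 1.

Definition coin_law (x : T) (b : bool) : R :=
  if x \in W then (if b then p else 1 - p) else (if b then 0 else 1).

(* The law of the random subset of [W] containing each vertex independently with
   probability [p], as a weight on indicator functions. *)
Definition subset_law (f : {ffun T -> bool}) : R := \prod_x coin_law x (f x).

Definition hits (A : {set T}) (f : {ffun T -> bool}) : nat := #|[set x in A | f x]|.

Lemma subset_law_ge0 f : 0 <= subset_law f.
Proof.
case/andP: p01 => p0 p1; apply: prodr_ge0 => x _; rewrite /coin_law.
by case: (x \in W); case: (f x) => //; lra.
Qed.

Lemma subset_law_sum1 : \sum_f subset_law f = 1.
Proof.
rewrite /subset_law -bigA_distr_bigA /=; apply: big1 => x _.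
by rewrite big_bool /coin_law; case: (x \in W) => /=; ring.
Qed.

Lemma subset_law_mgf (A : {set T}) (b : R) : A \subset W ->
  \sum_f subset_law f * b ^+ hits A f = (1 - p + p * b) ^+ #|A|.
Proof.
move=> AW; rewrite -prodr_const [RHS]big_mkcond /=.
under eq_bigr => f _ do
  rewrite /hits -prodr_const [X in _ * X]big_mkcond -big_split /=.
under eq_bigr => f _ do under eq_bigr => x _ do rewrite inE.
rewrite -(bigA_distr_bigA (fun x c => coin_law x c * (if (x \in A) && c then b else 1))) /=.
apply: eq_bigr => x _; rewrite big_bool /coin_law /=.
case xA: (x \in A); first by rewrite (fintype.subsetP AW x xA) /=; ring.
by case: (x \in W) => /=; ring.
Qed.

Lemma subset_law_exp_tail (A : {set T}) (eta t : R) : A \subset W ->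
  \sum_(f | eta * t < eta * (hits A f)%:R) subset_law f
    <= expR (- (eta * t)) * (1 - p + p * expR eta) ^+ #|A|.
Proof.
move=> AW; rewrite -subset_law_mgf // mulr_sumr big_mkcond /=.
apply: ler_sum => f _; rewrite mulrCA -expRM_natl -expRD.
case: ifP => [tail|_]; last by rewrite mulr_ge0 ?subset_law_ge0 ?expR_ge0.
rewrite -[X in X <= _]mulr1 ler_wpM2l ?subset_law_ge0 //.
apply: le_trans (expR_ge1Dx _); rewrite mulrC; lra.
Qed.

Lemma subset_law_deviation (A : {set T}) (N lam : R) : A \subset W ->
  #|A|%:R <= N -> 0 < lam <= 2 * N ->
  \sum_(f | lam < `|(hits A f)%:R - p * #|A|%:R|) subset_law f
    <= 2 * expR (- (lam ^+ 2 / (8 * N))).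
Proof.
move=> AW AN /andP[lam0 lam_le]; have N0 : 0 < N by lra.
have tail (eta : R) : eta <= 2^-1 ->
    \sum_(f | eta * (p * #|A|%:R + 4 * N * eta) < eta * (hits A f)%:R) subset_law f
      <= expR (- (2 * N * eta ^+ 2)).
  move=> eta_le; apply: le_trans (subset_law_exp_tail eta _ AW) _.
  exact: chernoff_exponent p01 AN eta_le.
have eta0 : 0 < lam / (4 * N) by rewrite divr_gt0 ?mulr_gt0.
have eta_le : lam / (4 * N) <= 2^-1 by rewrite ler_pdivrMr ?mulr_gt0 //; lra.
have up := tail _ eta_le.
have low := tail (- (lam / (4 * N))) ltac:(lra).
have exponentE : 2 * N * (lam / (4 * N)) ^+ 2 = lam ^+ 2 / (8 * N) by field; lra.
rewrite sqrrN exponentE in low; rewrite exponentE in up.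
rewrite mulr_natl mulr2n; apply: le_trans (lerD up low).
rewrite [in X in _ <= X]big_mkcond [X in _ <= _ + X]big_mkcond -big_split big_mkcond /=.
apply: ler_sum => f _; have w0 := subset_law_ge0 f.
rewrite ltr_pM2l // ltr_nM2l ?oppr_lt0 // mulrN.
have -> : 4 * N * (lam / (4 * N)) = lam by field; lra.
case: ifPn => [dev|_]; last by rewrite addr_ge0 //; case: ifP.
case: ifPn => [_|up_ev]; first by rewrite lerDl; case: ifP.
case: ifPn => [_|low_ev]; first by rewrite add0r.
by move: dev up_ev low_ev; rewrite ltr_normr -!leNgt; lra.
Qed.

End RandomSubset.

Section CardinalityAdjustment.
Variable T : finType.
Implicit Types A B C S : {set T}.

Lemma exists_card_between A B n : A \subset B -> (#|A| <= n <= #|B|)%N ->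
  exists C, [/\ A \subset C, C \subset B & #|C| = n].
Proof.
move=> + /andP[]; move gap: (n - #|A|)%N => k.
elim: k A gap => [|k IH] A gap AB An nB.
  by exists A; split => //; apply/eqP; rewrite eqn_leq An -subn_eq0 gap.
have /fintype.subsetPn [x xB xA] : ~~ (B \subset A).
  by apply/negP => /subset_leq_card; lia.
have cxA : #|x |: A| = #|A|.+1 by rewrite cardsU1 xA.
have xAB : x |: A \subset B by rewrite finset.subUset finset.sub1set xB.
have [|||C [xAC CB cC]] := IH (x |: A) _ xAB; rewrite ?cxA; try lia.
by exists C; split => //; apply: fintype.subset_trans xAC; apply: finset.subsetUr.
Qed.

Lemma card_setI_subset S A B : A \subset B ->
  (#|S :&: A| <= #|S :&: B| <= #|S :&: A| + (#|B| - #|A|))%N.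
Proof.
move=> AB; have SAB : S :&: A \subset S :&: B by apply: finset.setIS.
rewrite subset_leq_card //=.
have : (S :&: B) :\: (S :&: A) \subset B :\: A.
  by apply/fintype.subsetP => x; rewrite !inE; case: (x \in S); case: (x \in A).
move/subset_leq_card; rewrite !cardsDS //; have := subset_leq_card SAB; lia.
Qed.

Lemma resize_subset (R : numDomainType) (W U0 : {set T}) (a : nat) :
  U0 \subset W -> (a <= #|W|)%N ->
  exists U : {set T}, [/\ U \subset W, #|U| = a &
    forall S, `|#|S :&: U|%:R - #|S :&: U0|%:R| <= `|a%:R - #|U0|%:R| :> R].
Proof.
move=> U0W aW.
have shift A B S : A \subset B ->
    `|#|S :&: B|%:R - #|S :&: A|%:R| <= `|#|B|%:R - #|A|%:R| :> R.
  move=> AB; have /andP[h1 h2] := card_setI_subset S AB.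
  have cAB := subset_leq_card AB.
  rewrite !ger0_norm ?subr_ge0 ?ler_nat // lerBlDl -natrB // -natrD ler_nat.
  by rewrite addnC; lia.
have [aU0|U0a] := leqP a #|U0|.
  have [|U [_ UU0 <-]] := exists_card_between (n := a) (finset.sub0set U0).
    by rewrite cards0.
  exists U; split => // [|S]; first exact: fintype.subset_trans UU0 U0W.
  by rewrite distrC [X in _ <= X]distrC; apply: shift.
have [|U [U0U UW <-]] := exists_card_between (n := a) U0W; first by rewrite ltnW.
by exists U; split => // S; apply: shift.
Qed.
End CardinalityAdjustment.

Lemma union_bound (R : realFieldType) (Omega I : finType) (w : Omega -> R)
    (bad : I -> pred Omega) (J : {set I}) (eps : R) :
  (forall f, 0 <= w f) -> \sum_f w f = 1 ->
  (forall i, i \in J -> \sum_(f | bad i f) w f <= eps) -> #|J|%:R * eps < 1 ->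
  exists f, forall i, i \in J -> ~~ bad i f.
Proof.
move=> w_ge0 w_sum bad_le J_eps.
case: (boolP [exists f, [forall i in J, ~~ bad i f]]).
  by case/existsP => f /forall_inP; exists f.
move/existsPn => all_bad; suff : 1 <= #|J|%:R * eps by lra.
rewrite mulr_natl -sumr_const -{1}w_sum.
apply: le_trans (ler_sum _ bad_le); rewrite (exchange_big_dep xpredT) //=.
apply: ler_sum => f _; have /forall_inPn [i iJ /negPn bad_i] := all_bad f.
by rewrite (bigD1 i) ?iJ //= lerDl sumr_ge0.
Qed.

Lemma balanced_subset (R : realType) (T I : finType) (W : {set T}) (F : I -> {set T})
    (J : {set I}) (a : nat) (lam : R) :
  (0 < #|W|)%N -> (a <= #|W|)%N -> 0 < lam <= 2 * #|W|%:R ->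
  (forall i, F i \subset W) ->
  (2 * #|J| + 2)%:R * expR (- (lam ^+ 2 / (8 * #|W|%:R))) < 1 ->
  exists U : {set T}, [/\ U \subset W, #|U| = a & forall i, i \in J ->
    `|#|F i :&: U|%:R - a%:R / #|W|%:R * #|F i|%:R| <= 2 * lam].
Proof.
move=> W0 aW lam_bd FW small.
set p : R := a%:R / #|W|%:R.
have p01 : 0 <= p <= 1.
  by rewrite divr_ge0 //= ler_pdivrMr ?ltr0n // mul1r ler_nat.
have pW : p * #|W|%:R = a%:R by rewrite mulfVK ?pnatr_eq0 -?lt0n.
(* Index [None] stands for [W] itself: controlling the size of the random subset
   keeps the final resizing cheap. *)
pose G o := if o is Some i then F i else W.
have GW o : G o \subset W by case: o => [i|]; rewrite ?FW ?subxx.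
have cardG o : #|G o|%:R <= #|W|%:R :> R by rewrite ler_nat subset_leq_card.
pose J' := None |: [set Some i | i in J].
have cardJ' : #|J'| = #|J|.+1.
  have None_new : None \notin [set Some i | i in J] by apply/imsetP; case.
  by rewrite cardsU1 None_new card_imset //; exact: Some_inj.
have small' : #|J'|%:R * (2 * expR (- (lam ^+ 2 / (8 * #|W|%:R)))) < 1.
  by rewrite cardJ' mulrA -natrM (_ : #|J|.+1 * 2 = 2 * #|J| + 2)%N; last lia.
have [f good] := union_bound
  (bad := fun o f => lam < `|(hits (G o) f)%:R - p * #|G o|%:R|) (J := J')
  (subset_law_ge0 W p01) (subset_law_sum1 W p)
  (fun o _ => subset_law_deviation p01 (GW o) (cardG o) lam_bd) small'.
set U0 := [set x in W | f x].
have U0W : U0 \subset W by apply/fintype.subsetP => x; rewrite inE => /andP[].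
have hitsE (A : {set T}) : A \subset W -> hits A f = #|A :&: U0|.
  move=> AW; apply: eq_card => x; rewrite !inE.
  by case xA: (x \in A); rewrite //= (fintype.subsetP AW x xA).
have [U [UW cardU shift]] := resize_subset R U0W aW.
exists U; split => // i iJ.
have devW := good None (setU11 _ _).
have devF := good (Some i) (setU1r _ (imset_f _ iJ)).
rewrite -leNgt hitsE // (finset.setIidPr U0W) pW distrC in devW.
rewrite -leNgt hitsE // in devF.
apply: le_trans (ler_distD #|F i :&: U0|%:R _ _) _.
by have := shift (F i); lra.
Qed.
Lemma proportional_share (R : realFieldType) (N a F c delta s : R) :
  0 < N -> N <= 3 * a -> N <= 3 * (N - a) -> 0 <= s -> delta * N <= F ->
  `|c - a / N * F| <= 2 * (N * s / 3) ->
  (delta - 2 * s) * a <= c /\ (delta - 2 * s) * (N - a) <= F - c.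
Proof.
move=> N0 Na Nb s0 F_ge; rewrite ler_norml => /andP[c_lo c_hi].
have pN : a / N * N = a by rewrite mulfVK ?gt_eqF.
have p0 : 0 <= a / N by rewrite divr_ge0 ?ltW //; lra.
have p1 : a / N <= 1 by rewrite ler_pdivrMr // mul1r; lra.
move: (a / N) pN p0 p1 c_lo c_hi => p pN p0 p1 c_lo c_hi.
have q0 : 0 <= 1 - p by rewrite subr_ge0.
have := ler_wpM2l p0 F_ge; have := ler_wpM2l q0 F_ge.
have := ler_wpM2r s0 Na; have := ler_wpM2r s0 Nb.
split; nra.
Qed.

Lemma semideg_split (R : realType) (T : finType) (e : rel T) (W : {set T})
    (a : nat) (delta s : R) :
  (0 < #|W| <= 3 * a)%N -> (#|W| <= 3 * (#|W| - a))%N -> 0 < s <= 6 ->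
  (4 * #|W| + 2)%:R * expR (- (#|W|%:R * s ^+ 2 / 72)) < 1 ->
  semideg_lb e W (delta * #|W|%:R) ->
  exists U : {set T}, [/\ U \subset W, #|U| = a,
    semideg_lb e U ((delta - 2 * s) * a%:R) &
    semideg_lb e (W :\: U) ((delta - 2 * s) * (#|W| - a)%:R)].
Proof.
move=> /andP[W0 Wa] Wb /andP[s0 s6] small degW.
have aW : (a <= #|W|)%N by lia.
have N0 : 0 < #|W|%:R :> R by rewrite ltr0n.
pose J := finset.setX W [set: bool].
have cardJ : #|J| = (2 * #|W|)%N by rewrite cardsX cardsT card_bool mulnC.
have lam_bd : 0 < #|W|%:R * s / 3 <= 2 * #|W|%:R.
  by rewrite divr_gt0 ?mulr_gt0 //= ler_pdivrMr //; nra.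
have small' : (2 * #|J| + 2)%:R *
    expR (- ((#|W|%:R * s / 3) ^+ 2 / (8 * #|W|%:R))) < 1.
  rewrite cardJ mulnA (_ : _ / (8 * _) = #|W|%:R * s ^+ 2 / 72) //.
  by field; rewrite gt_eqF.
have [U [UW cardU bal]] :=
  balanced_subset W0 aW lam_bd (fun vb => nbhd_subset e W vb.1 vb.2) small'.
have share v b : v \in W ->
    (delta - 2 * s) * a%:R <= #|nbhd e W v b :&: U|%:R /\
    (delta - 2 * s) * (#|W| - a)%:R <= #|nbhd e W v b :\: U|%:R.
  move=> vW; rewrite cardsD !natrB ?subset_leq_card ?finset.subsetIl //.
  apply: proportional_share (degW v b vW) (bal (v, b) _) => //.
  - by rewrite -natrM ler_nat.
  - by rewrite -natrB // -natrM ler_nat.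
  - exact: ltW.
  - by rewrite finset.in_setX vW inE.
exists U; split => // v b vU.
- by rewrite (nbhd_setI _ _ _ UW); apply: (share v b (fintype.subsetP UW v vU)).1.
- rewrite nbhd_setD; apply: (share v b _).2.
  by move: vU; rewrite inE => /andP[].
Qed.

Section Partitions.
Variables (R : realType) (T : finType) (e : rel T).

(* Parts are labelled by natural numbers below [m] rather than by ['I_m], so
   that [m] can vary along the induction. *)
Definition partitionable (l m : nat) (loss : R) : Prop :=
  forall (delta : R) (W : {set T}), #|W| = (l * m)%N ->
  semideg_lb e W (delta * (l * m)%:R) ->
  exists g : T -> nat, {in W, forall v, g v < m}%N /\
    forall i, (i < m)%N -> #|[set v in W | g v == i]| = l /\
      semideg_lb e [set v in W | g v == i] ((delta - loss) * l%:R).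

Lemma partitionable_le1 l m : (m <= 1)%N -> partitionable l m 0.
Proof.
move=> m_le1 delta W cardW degW; exists (fun _ => 0%N).
case: m m_le1 cardW degW => [|[|//]] _ cardW degW.
  split=> // v vW; suff : (0 < #|W|)%N by rewrite cardW muln0.
  by apply/card_gt0P; exists v.
split=> // -[|//] _ /=.
have -> : [set v in W | true] = W by apply/finset.setP => v; rewrite inE andbT.
by rewrite cardW !muln1 subr0 in degW *.
Qed.

Lemma partitionable_le l m (loss loss' : R) : loss <= loss' ->
  partitionable l m loss -> partitionable l m loss'.
Proof.
move=> le_loss Pm delta W cardW degW; have [g [g_lt parts]] := Pm delta W cardW degW.
exists g; split=> // i lt_i; have [cardi degi] := parts i lt_i; split=> // v b vi.
apply: le_trans (degi v b vi); apply: ler_wpM2r => //; lra.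
Qed.

Lemma partitionable_add l m1 m2 (s loss : R) :
  (forall (delta : R) (W : {set T}), #|W| = (l * (m1 + m2))%N ->
    semideg_lb e W (delta * (l * (m1 + m2))%:R) ->
    exists U : {set T}, [/\ U \subset W, #|U| = (l * m1)%N,
      semideg_lb e U ((delta - s) * (l * m1)%:R) &
      semideg_lb e (W :\: U) ((delta - s) * (l * m2)%:R)]) ->
  partitionable l m1 loss -> partitionable l m2 loss ->
  partitionable l (m1 + m2) (s + loss).
Proof.
move=> split P1 P2 delta W cardW degW.
have [U [UW cardU degU degWU]] := split delta W cardW degW.
have cardWU : #|W :\: U| = (l * m2)%N by rewrite cardsDS // cardW cardU mulnDr addKn.
have [g1 [g1_lt parts1]] := P1 _ U cardU degU.
have [g2 [g2_lt parts2]] := P2 _ _ cardWU degWU.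
exists (fun v => if v \in U then g1 v else m1 + g2 v)%N; split.
  move=> v vW; case: ifPn => vU; first by have := g1_lt v vU; lia.
  by have := g2_lt v; rewrite inE vU vW => /(_ isT); lia.
move=> i lt_i; rewrite opprD addrA.
have [lt_i1 | le_i1] := ltnP i m1.
  have -> : [set v in W | (if v \in U then g1 v else m1 + g2 v)%N == i] =
            [set v in U | g1 v == i].
    apply/finset.setP => v; rewrite !inE; case: ifPn => vU.
      by rewrite (fintype.subsetP UW v vU).
    by rewrite andbC; apply/negbTE/eqP; lia.
  exact: parts1.
have -> : [set v in W | (if v \in U then g1 v else m1 + g2 v)%N == i] =
          [set v in W :\: U | g2 v == i - m1]%N.
  apply/finset.setP => v; rewrite !inE; case: ifPn => vU /=.
    by have := g1_lt v vU; rewrite andbC; case: eqP => //; lia.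
  by congr (_ && _); apply/eqP/eqP; lia.
by apply: parts2; lia.
Qed.

End Partitions.
Definition threshold : nat := (10 * 288 ^ 4) ^ 3.

Section Numerics.
Variable R : realType.

Definition level_loss (l k : nat) : R := l%:R `^ (- 3^-1) * 2 `^ (- (k%:R / 3)).

Definition loss (l k : nat) : R :=
  2 * (l%:R `^ (- 3^-1)) * \sum_(j < k) ((2 : R) `^ (- (j%:R / 3))).

Lemma loss0 l : loss l 0 = 0.
Proof. by rewrite /loss big_ord0 mulr0. Qed.

Lemma lossS l k : loss l k.+1 = 2 * level_loss l k + loss l k.
Proof. by rewrite /loss big_ord_recr /= mulrDr mulrA addrC. Qed.

Lemma level_loss_ge0 l k : 0 <= level_loss l k.
Proof. by rewrite mulr_ge0 ?powR_ge0. Qed.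

Lemma powR_cube (a r : R) : 0 <= a -> (a `^ r) ^+ 3 = a `^ (r * 3).
Proof. by move=> a0; rewrite powRrM powR_mulrn // powR_ge0. Qed.

Lemma level_loss_cube l k : (0 < l)%N -> level_loss l k ^+ 3 * (l * 2 ^ k)%:R = 1.
Proof.
move=> l0; rewrite exprMn !powR_cube ?ler0n // natrM natrX.
rewrite (_ : - 3^-1 * 3 = -1); last by field.
rewrite (_ : - (k%:R / 3) * 3 = - k%:R); last by field.
rewrite powR_inv1 ?ler0n // powRN powR_mulrn ?ler0n //.
by rewrite mulrACA mulVf ?pnatr_eq0 -?lt0n // mul1r mulVf // expf_neq0.
Qed.

Lemma sum_pow2_cbrt_le5 k : \sum_(j < k) ((2 : R) `^ (- (j%:R / 3))) <= 5.
Proof.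
set r : R := 2 `^ (- 3^-1).
have r0 : 0 <= r by rewrite powR_ge0.
have powE j : (2 : R) `^ (- (j%:R / 3)) = r ^+ j.
  by rewrite -powR_mulrn // -powRrM; congr (_ `^ _); field.
have r3 : r ^+ 3 = 2^-1.
  rewrite powR_cube ?ler0n // (_ : - 3^-1 * 3 = -1); last by field.
  by rewrite powR_inv1 ?ler0n.
have r_le : r <= 4 / 5.
  rewrite leNgt; apply/negP => r_gt.
  have : (4 / 5) ^+ 3 < r ^+ 3 by rewrite ltrXn2r // nnegrE; lra.
  rewrite r3; lra.
suff partial : \sum_(j < k) r ^+ j <= 5 - 5 * r ^+ k.
  under eq_bigr do rewrite powE.
  by apply: le_trans partial _; rewrite lerBlDr lerDl mulr_ge0 // exprn_ge0.
elim: k => [|k IH]; first by rewrite big_ord0 expr0; lra.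
rewrite big_ord_recr /= exprS; have := exprn_ge0 k r0; nra.
Qed.

Lemma loss_le l k : loss l k <= 10 * l%:R `^ (- 3^-1).
Proof.
rewrite /loss mulrAC; apply: ler_wpM2r; first exact: powR_ge0.
by have := sum_pow2_cbrt_le5 k; lra.
Qed.

Lemma cube_expR_lt1 (x : R) : threshold%:R < x ^+ 3 ->
  10 * x ^+ 3 * expR (- (x / 72)) < 1.
Proof.
rewrite /threshold natrX natrM natrX => x3_gt.
have x0 : 0 < x.
  rewrite ltNge; apply/negP => x_le0; move: x3_gt; apply/negP; rewrite -leNgt.
  by apply: le_trans (_ : 0 <= _); rewrite ?exprn_ge0 // exprS mulr_le0_ge0 ?sqr_ge0.
have {x3_gt} x_gt : 10 * 288 ^+ 4 < x by rewrite -(ltr_pXn2r (n := 3)) ?nnegrE ?ltW.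
have y0 : 0 < x / 288 by rewrite divr_gt0.
have exp4 : expR (x / 72) = expR (x / 288) ^+ 4 by rewrite -expRM_natl; congr expR; field.
have pow4_le : (x / 288) ^+ 4 <= expR (x / 72).
  rewrite exp4 lerXn2r ?nnegrE ?expR_ge0 ?ltW //.
  by apply: lt_le_trans (expR_ge1Dx _); rewrite ltrDr.
have pow4_gt : 10 * x ^+ 3 < (x / 288) ^+ 4.
  rewrite expr_div_n ltr_pdivlMr ?exprn_gt0 // [x ^+ 4]exprSr.
  have := exprn_gt0 3 x0; move: (288 ^+ 4 : R) x_gt => c x_gt; nra.
rewrite expRN ltr_pdivrMr ?expR_gt0 // mul1r.
exact: lt_le_trans pow4_gt pow4_le.
Qed.

Lemma split_exp_condition (x s N : R) : 0 < x -> x * s = 1 ->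
  1 <= x ^+ 3 -> x ^+ 3 <= N <= 2 * x ^+ 3 ->
  10 * x ^+ 3 * expR (- (x / 72)) < 1 ->
  (4 * N + 2) * expR (- (N * s ^+ 2 / 72)) < 1.
Proof.
move=> x0 xs x3_ge1 /andP[N_ge N_le]; apply: le_lt_trans; apply: ler_pM.
- by lra.
- exact: expR_ge0.
- by lra.
rewrite ler_expR lerN2 ler_pM2r // -[x in x <= _](mulr1) -(expr1n _ 2) -xs exprMn.
have s0 : 0 < s by rewrite -(pmulr_rgt0 _ x0) xs.
by rewrite mulrA -exprS ler_pM2r // exprn_gt0.
Qed.

Lemma level_loss_split_condition l k (N : nat) :
  (threshold < l)%N -> (l * 2 ^ k <= N <= 2 * (l * 2 ^ k))%N ->
  0 < level_loss l k <= 6 /\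
  (4 * N + 2)%:R * expR (- (N%:R * level_loss l k ^+ 2 / 72)) < 1.
Proof.
move=> l_gt N_bd; have l0 : (0 < l)%N := leq_trans (ltn0Sn _) l_gt.
set s := level_loss l k; set x := s^-1.
have s0 : 0 < s by rewrite mulr_gt0 ?powR_gt0 ?ltr0n.
have x0 : 0 < x by rewrite invr_gt0.
have xs : x * s = 1 by rewrite mulVf ?gt_eqF.
have x3 : x ^+ 3 = (l * 2 ^ k)%:R.
  transitivity (x ^+ 3 * (s ^+ 3 * (l * 2 ^ k)%:R)).
    by rewrite level_loss_cube // mulr1.
  by rewrite mulrA -exprMn xs expr1n mul1r.
have x3_ge1 : 1 <= x ^+ 3 by rewrite x3 ler1n muln_gt0 l0 expn_gt0.
have x_ge1 : 1 <= x by move: x3_ge1; rewrite expr_ge1 // ltW.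
have s_le1 : s <= 1 by rewrite -[s]invrK invf_le1 -/x.
split; first by apply/andP; split => //; apply: le_trans s_le1 _; rewrite ler1n.
rewrite natrD natrM; apply: split_exp_condition x0 xs x3_ge1 _ _.
  by rewrite x3 -natrM !ler_nat.
by apply: cube_expR_lt1; rewrite x3 ltr_nat (leq_trans l_gt) // leq_pmulr ?expn_gt0.
Qed.

End Numerics.

Lemma partitionable_pow2 (R : realType) (T : finType) (e : rel T) (l k m : nat) :
  (threshold < l)%N -> (m <= 2 ^ k)%N -> partitionable e l m (loss R l k).
Proof.
move=> l_gt; have l0 : (0 < l)%N := leq_trans (ltn0Sn _) l_gt.
elim: k m => [|k IH] m le_m.
  by rewrite loss0; apply: partitionable_le1; rewrite expn0 in le_m.
have [le_mk | lt_km] := leqP m (2 ^ k).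
  apply: partitionable_le (IH m le_mk).
  by rewrite lossS lerDr mulr_ge0 ?level_loss_ge0.
rewrite expnS in le_m; set m1 := (m - m %/ 2)%N; set m2 := (m %/ 2)%N.
have m_bd : [&& 0 < m1 + m2, m1 + m2 <= 3 * m1 & m1 + m2 <= 3 * m2]%N.
  by rewrite /m1 /m2; lia.
have -> : m = (m1 + m2)%N by rewrite /m1 /m2; lia.
rewrite lossS; apply: partitionable_add; try (apply: IH; rewrite /m1 /m2; lia).
move=> delta W cardW degW; rewrite -cardW in degW.
have cardWU : (#|W| - l * m1 = l * m2)%N by rewrite cardW mulnDr addKn.
have [|s_bd small] := @level_loss_split_condition R _ k #|W| l_gt.
  by rewrite cardW mulnCA !leq_mul2l; apply/andP; split; apply/orP; right; lia.
have W_lt : (0 < #|W| <= 3 * (l * m1))%N.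
  by rewrite cardW muln_gt0 l0 mulnCA leq_mul2l; lia.
have WU_lt : (#|W| <= 3 * (#|W| - l * m1))%N.
  by rewrite cardWU cardW mulnCA leq_mul2l; lia.
have [U [UW cardU degU degWU]] := semideg_split W_lt WU_lt s_bd small degW.
by exists U; rewrite -cardWU.
Qed.

Theorem lemma2p1 :
  exists l0 : nat, forall l : nat, (l0 <= l)%N ->
  forall (R : realType) (delta : R) (m k : nat),
  0 < delta -> (m <= 2 ^ k)%N ->
  forall (T : finType) (e : rel T), digraph e ->
  #|T| = (l * m)%N ->
  (min_semideg e [set: T])%:R >= delta * (l * m)%N%:R ->
  exists f : T -> 'I_m,
    forall i : 'I_m,
      #|[set v | f v == i]| = l /\
      (min_semideg e [set v | f v == i])%:R >=
        (delta - 2 * (l%:R `^ (- 3^-1)) *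
           \sum_(j < k) ((2 : R) `^ (- (j%:R / 3)))) * l%:R /\
      (delta - 2 * (l%:R `^ (- 3^-1)) *
           \sum_(j < k) ((2 : R) `^ (- (j%:R / 3)))) * l%:R >=
        (delta - 10 * (l%:R `^ (- 3^-1))) * l%:R.
Proof.
exists threshold.+1 => l l_gt R delta m k _ le_m T e _ cardT degT.
have degT' : semideg_lb e [set: T] (delta * (l * m)%:R).
  by move=> v b vT; apply: le_trans degT _; apply: semideg_lb_min_semideg.
have cardT' : #|[set: T]| = (l * m)%N by rewrite cardsT.
have [g [g_lt parts]] := partitionable_pow2 l_gt le_m cardT' degT'.
exists (fun v => Ordinal (g_lt v (finset.in_setT v))) => i.
have [cardi degi] := parts i (ltn_ord i).
have -> : [set v | Ordinal (g_lt v (finset.in_setT v)) == i] = [set v in [set: T] | g v == i].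
  by apply/finset.setP => v; rewrite !inE -val_eqE.
split=> //; split; first by apply: min_semideg_ge degi; rewrite cardi (leq_trans (ltn0Sn _) l_gt).
by apply: ler_wpM2r => //; rewrite lerB // loss_le.
Qed.
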